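(* Let $\mathcal{A}=\langle\Sigma,Q,q_0,\delta,\alpha\rangle$ be a nice GFG-tNCW and let $\mathcal{E}\subseteq Q\times\Sigma\times Q$ be an allowed set for $\mathcal{A}$. Let $q,s\in Q$, $\sigma\in\Sigma$, and let $\langle q,\sigma,q'\rangle\in\Delta$ be a transition of $\mathcal{A}$ and $\langle s,\sigma,s'\rangle\in\Delta_\mathcal{E}$ a transition of $\mathcal{A}_\mathcal{E}$. If $q\sim_\mathcal{A}s$, then $q'\sim_\mathcal{A}s'$.
   Context: A tNCW is $\mathcal{A}=\langle\Sigma,Q,q_0,\delta,\alpha\rangle$: finite alphabet $\Sigma$, finite state set $Q$, initial state $q_0$, transition function $\delta:Q\times\Sigma\to 2^Q\setminus\{\emptyset\}$ with transition relation $\Delta=\{\langle q,\sigma,s\rangle:s\in\delta(q,\sigma)\}$, and $\alpha\subseteq\Delta$. $\alpha$-transitions are those in $\alpha$, $\bar\alpha$-transitions those in $\Delta\setminus\alpha$; $\delta^{\bar\alpha}(q,\sigma)$ denotes the $\sigma$-successors via $\bar\alpha$-transitions. A run on $w=\sigma_1\sigma_2\cdots$ is $r_0r_1\cdots$ with $r_0=q_0$, $r_{i+1}\in\delta(r_i,\sigma_{i+1})$; accepting iff it traverses $\alpha$-transitions only finitely often; $L(\mathcal{A})$ the accepted language. $\mathcal{A}^q$ is $\mathcal{A}$ with initial state $q$; $q\sim_\mathcal{A}s$ iff $L(\mathcal{A}^q)=L(\mathcal{A}^s)$. GFG: there is $f:\Sigma^*\to Q$ with $f(\epsilon)=q_0$,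 $\langle f(u),\sigma,f(u\sigma)\rangle\in\Delta$ for all $u,\sigma$, and for each $w\in L(\mathcal{A})$ the run $f(w[1,0]),f(w[1,1]),\dots$ is accepting; $q$ is GFG if $\mathcal{A}^q$ is. Semantically deterministic: all $\sigma$-successors of a state pairwise $\sim$; safe deterministic: $|\delta^{\bar\alpha}(q,\sigma)|\le1$; normal: a $\bar\alpha$-path from $q$ to $s$ implies one from $s$ to $q$. Nice: all states reachable and GFG, normal, safe deterministic, semantically deterministic. A triple $\langle q,\sigma,s\rangle\in Q\times\Sigma\times Q$ is an allowed transition of $\mathcal{A}$ if there is $s''\in Q$ with $s\sim_\mathcal{A}s''$ and $\langle q,\sigma,s''\rangle\in\Delta$. A set $\mathcal{E}\subseteq Q\times\Sigma\times Q$ is an allowed set if all its triples are allowed transitions of $\mathcal{A}$. For such $\mathcal{E}$, $\mathcal{A}_\mathcal{E}=\langle\Sigma,Q,q_0,\delta_\mathcal{E},\alpha_\mathcal{E}\rangle$ is the tNCW with transition relation $\Delta_\mathcal{E}=\Delta\cup\mathcal{E}$ and $\alpha_\mathcal{E}=\alpha\cup\mathcal{E}$. *)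

From mathcomp Require Import all_boot.
From Stdlib Require Import Relations.
Set Implicit Arguments. Unset Strict Implicit. Unset Printing Implicit Defensive.

(* A tNCW <Sigma, Q, q0, delta, alpha>: transition relation Delta given as a
   ternary relation (s \in delta(q,a) iff trans q a s); alpha as a relation too. *)
Record tNCW (Sigma Q : finType) := TNCW {
  init  : Q;
  trans : Q -> Sigma -> Q -> Prop;
  acc   : Q -> Sigma -> Q -> Prop }.

Section Defs.
Variables (Sigma Q : finType).
Implicit Types (A : tNCW Sigma Q) (w : nat -> Sigma) (r : nat -> Q).

Definition wf_tNCW A : Prop :=
  (forall q a, exists s, trans A q a s) /\
  (forall q a s, acc A q a s -> trans A q a s).

(* run of A^q on w = w 0, w 1, ...  (w i is sigma_{i+1}) *)
Definition is_run A q w r : Prop :=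
  r 0 = q /\ forall i, trans A (r i) (w i) (r i.+1).

Definition accepting A w r : Prop :=
  exists N, forall i, N <= i -> ~ acc A (r i) (w i) (r i.+1).

Definition lang_from A q w : Prop :=
  exists r, is_run A q w r /\ accepting A w r.

Definition lang A w : Prop := lang_from A (init A) w.

Definition equiv_st A q s : Prop := forall w, lang_from A q w <-> lang_from A s w.

Definition prefix w i : seq Sigma := mkseq w i.

Definition GFG_from A q : Prop :=
  exists f : seq Sigma -> Q,
    f [::] = q /\
    (forall u a, trans A (f u) a (f (rcons u a))) /\
    (forall w, lang_from A q w -> accepting A w (fun i => f (prefix w i))).

Definition GFG A : Prop := GFG_from A (init A).

Definition step A q s : Prop := exists a, trans A q a s.
Definition safe_step A q s : Prop := exists a, trans A q a s /\ ~ acc A q a s.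

Definition reachable A q : Prop := clos_refl_trans Q (step A) (init A) q.

Definition semantically_deterministic A : Prop :=
  forall q a s1 s2, trans A q a s1 -> trans A q a s2 -> equiv_st A s1 s2.

Definition safe_deterministic A : Prop :=
  forall q a s1 s2, trans A q a s1 -> ~ acc A q a s1 ->
    trans A q a s2 -> ~ acc A q a s2 -> s1 = s2.

Definition normal A : Prop :=
  forall q s, clos_refl_trans Q (safe_step A) q s ->
              clos_refl_trans Q (safe_step A) s q.

Definition nice A : Prop :=
  (forall q, reachable A q) /\ (forall q, GFG_from A q) /\ normal A /\
  safe_deterministic A /\ semantically_deterministic A.

Definition allowed_transition A q a s : Prop :=
  exists s'', equiv_st A s s'' /\ trans A q a s''.

Definition allowed_set A (E : Q -> Sigma -> Q -> Prop) : Prop :=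
  forall q a s, E q a s -> allowed_transition A q a s.

Definition augment A (E : Q -> Sigma -> Q -> Prop) : tNCW Sigma Q :=
  TNCW (init A) (fun q a s => trans A q a s \/ E q a s)
               (fun q a s => acc A q a s \/ E q a s).

End Defs.

From mathcomp Require Import all_boot.

Set Implicit Arguments.
Unset Strict Implicit.

(* In a semantically deterministic automaton every a-successor of q accepts
   exactly the residual a^-1 L(A^q), so equivalent states have equivalent
   a-successors.  An allowed transition of A_E ends in a state equivalent to
   a genuine a-successor, hence it cannot break this. *)

Definition wcons (Sigma : Type) (a : Sigma) (w : nat -> Sigma) : nat -> Sigma :=
  fun i => if i is j.+1 then w j else a.

Section Residuals.
Variables (Sigma Q : finType) (A : tNCW Sigma Q).

Lemma equiv_st_sym q s : equiv_st A q s -> equiv_st A s q.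
Proof. by move=> eqs w; apply: iff_sym. Qed.

Lemma equiv_st_trans q s t :
  equiv_st A q s -> equiv_st A s t -> equiv_st A q t.
Proof. by move=> eqs est w; apply: iff_trans (eqs w) (est w). Qed.

Lemma lang_from_wcons q a q' w :
  trans A q a q' -> lang_from A q' w -> lang_from A q (wcons a w).
Proof.
move=> tq [r [[r0 rr] [N accN]]].
exists (fun i => if i is j.+1 then r j else q); split.
- by split=> // -[|i] /=; [rewrite r0 | apply: rr].
- by exists N.+1 => -[|i] //= /accN.
Qed.

Lemma lang_from_wcons_inv q a w :
  lang_from A q (wcons a w) -> exists2 q', trans A q a q' & lang_from A q' w.
Proof.
move=> [r [[r0 rr] [N accN]]].
exists (r 1); first by rewrite -r0; exact: (rr 0).
exists (fun i => r i.+1); split; first by split=> // i; exact: (rr i.+1).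
by exists N => i leNi; apply: (accN i.+1); exact: leqW.
Qed.

Hypothesis sdA : semantically_deterministic A.

Lemma lang_from_succE q a q' w :
  trans A q a q' -> lang_from A q' w <-> lang_from A q (wcons a w).
Proof.
move=> tq; split; first exact: lang_from_wcons.
by case/lang_from_wcons_inv=> q'' tq'' /(sdA tq tq'' w).
Qed.

Lemma equiv_st_succ q s a q' s' :
  equiv_st A q s -> trans A q a q' -> trans A s a s' -> equiv_st A q' s'.
Proof.
move=> eqs tq ts w.
apply: iff_trans (lang_from_succE w tq) _.
exact: iff_trans (eqs _) (iff_sym (lang_from_succE w ts)).
Qed.

Lemma equiv_st_allowed_succ q s a q' s' :
  equiv_st A q s -> trans A q a q' -> allowed_transition A s a s' ->
  equiv_st A q' s'.
Proof.
move=> eqs tq [s'' [ess' ts'']].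
exact/(equiv_st_trans (equiv_st_succ eqs tq ts''))/equiv_st_sym.
Qed.

End Residuals.

Theorem mainTheorem7 (Sigma Q : finType) (A : tNCW Sigma Q)
  (E : Q -> Sigma -> Q -> Prop) :
  wf_tNCW A -> GFG A -> nice A -> allowed_set A E ->
  forall (q s q' s' : Q) (a : Sigma),
    trans A q a q' -> trans (augment A E) s a s' ->
    equiv_st A q s -> equiv_st A q' s'.
Proof.
move=> _ _ [_ [_ [_ [_ sdA]]]] allowedE q s q' s' a tq [ts | es] eqs.
- exact: (equiv_st_succ sdA eqs tq ts).
- exact: (equiv_st_allowed_succ sdA eqs tq (allowedE _ _ _ es)).
Qed.
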